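(* Let $n\in\omega$ and let $\mathcal{F}$ be a fully $\Delta$-capturing construction scheme of type $\langle m_k,n_{k+1},r_{k+1}\rangle_{k\in\omega}$ with $n_{k+1}\geq 2^{m_k}$ for all $k$. With $e_\alpha$ defined as in the context, the set $\mathbb{E}_e=\{e_\alpha:\alpha\in\omega_1\}\subseteq\mathbb{Z}^\omega$, ordered lexicographically, is $2n$-entangled.
   Context: Construction schemes: a type is a sequence $\langle m_k,n_{k+1},r_{k+1}\rangle_{k\in\omega}$ with $m_0=1$, $n_{k+1}\geq2$, $m_k>r_{k+1}$, $m_{k+1}=r_{k+1}+(m_k-r_{k+1})n_{k+1}$. A construction scheme of this type is a family $\mathcal{F}$ of nonempty finite subsets of $\omega_1$, cofinal under $\subseteq$, each member of size $m_k$ for some $k$, such that with $\mathcal{F}_k=\{F\in\mathcal{F}:|F|=m_k\}$: (i) for $E,F\in\mathcal{F}_k$, $E\cap F$ is an initial segment of $E$ and of $F$; (ii) each $F\in\mathcal{F}_{k+1}$ is $F_0\cup\dots\cup F_{n_{k+1}-1}$ with $F_i\in\mathcal{F}_k$ a $\Delta$-system with root $R(F)$, $|R(F)|=r_{k+1}$, $R(F)<F_0\setminus R(F)<\dots<F_{n_{k+1}-1}\setminus R(F)$. Let $\rho(\alpha,\beta)=\min\{k:\exists F\in\mathcal{F}_k\ \{\alpha,\beta\}\subseteq F\}$, $\|\alpha\|_k=|\{\xi<\alpha:\rho(\alpha,\xi)\leq k\}|$, $\Delta(\alpha,\beta)=$ least $k$ with $\|\alpha\|_k\ne\|\beta\|_k$.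 $\Xi_\alpha(0)=0$ and for $k\geq1$, for any $F\in\mathcal{F}_k$ containing $\alpha$, $\Xi_\alpha(k)=-1$ if $\alpha\in R(F)$, $=i$ if $\alpha\in F_i\setminus R(F)$. For finite $X\subseteq\omega_1$, $X(i)$ is its $i$-th element. $\langle D_j\rangle_{j<N}\subseteq[\omega_1]^m$ ($N\geq2$) is $\Delta$-captured at level $l$ if it is a $\Delta$-system with root $R$ of size $r$, $R<D_j\setminus R$, tails pairwise $<$-comparable, $\Xi_{D_j(a)}(l)=-1$ for $a<r$ and $=j$ for $a\geq r$, and $\Delta(D_i(a),D_j(a))=l$ for $i\neq j$, $r\leq a<m$. $\mathcal{F}$ is fully $\Delta$-capturing if for every uncountable family $\mathcal{S}$ of finite subsets of $\omega_1$ there are infinitely many $l$ such that some $n_l$ members of $\mathcal{S}$ can be enumerated as a family $\Delta$-captured at level $l$. The functions: for each $k$, let $\langle C^k_i\rangle_{0<i<n_{k+1}}$ enumerate (possibly with repetitions) the set $[m_k\setminus r_{k+1}]^{\leq n}$ of subsets of $m_k\setminus r_{k+1}$ of size at most $n$. For $\alpha<\omega_1$ define $e_\alpha:\omega\to\mathbb{Z}$ by: $e_\alpha(k)=0$ if $\Xi_\alpha(k)\leq0$; $e_\alpha(k)=\Xi_\alpha(k)$ if $\Xi_\alpha(k)>0$ and $\|\alpha\|_{k-1}\in C^{k-1}_{\Xi_\alpha(k)}$; $e_\alpha(k)=\Xi_\alpha(k)$ if $\Xi_\alpha(k)>0$, $|C^{k-1}_{\Xi_\alpha(k)}|=n$ and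 $\|\alpha\|_{k-1}<\min C^{k-1}_{\Xi_\alpha(k)}$; $e_\alpha(k)=-\Xi_\alpha(k)$ otherwise. $\mathbb{Z}^\omega$ is ordered by $f<_{lex}g$ iff $f(k)<g(k)$ for the least $k$ with $f(k)\neq g(k)$. For a linear order, an uncountable subset $\mathbb{E}$ is $k$-entangled if for every $\tau:k\to2$ and every uncountable family $\mathcal{A}\subseteq[\mathbb{E}]^k$ of pairwise disjoint sets there are distinct $a,b\in\mathcal{A}$ with $a(i)<b(i)\iff\tau(i)=0$ for all $i<k$. *)

From Stdlib Require Import List ZArith Arith Sorted Lia ClassicalEpsilon.
Import ListNotations.

Definition countable_set {X : Type} (P : X -> Prop) : Prop :=
  exists f : X -> nat, forall x y, P x -> P y -> f x = f y -> x = y.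
Definition uncountable_set {X : Type} (P : X -> Prop) : Prop :=
  ~ countable_set P.

(* ---------- omega_1, up to order isomorphism ----------
   An uncountable well-order all of whose proper initial segments are
   countable. *)
Record is_omega1 {T : Type} (lt : T -> T -> Prop) : Prop := {
  o1_irrefl : forall x, ~ lt x x;
  o1_trans : forall x y z, lt x y -> lt y z -> lt x z;
  o1_total : forall x y, lt x y \/ x = y \/ lt y x;
  o1_wf : well_founded lt;
  o1_segments : forall a, countable_set (fun x => lt x a);
  o1_uncountable : uncountable_set (fun _ : T => True)
}.

(* Finite subsets of omega_1 are represented by strictly increasing lists;
   X(i) is then  nth_error X i. *)

(* m k = m_k ; nn (S k) = n_{k+1} ; r (S k) = r_{k+1} *)
Definition is_type (m nn r : nat -> nat) : Prop :=
  m 0 = 1 /\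
  forall k, 2 <= nn (S k) /\ r (S k) < m k /\
            m (S k) = r (S k) + (m k - r (S k)) * nn (S k).


Definition level {T : Type} (FF : list T -> Prop) (m : nat -> nat) (k : nat)
  (F : list T) : Prop := FF F /\ length F = m k.

Definition init_seg_in {T : Type} (lt : T -> T -> Prop) (E F : list T) : Prop :=
  forall x y, In x E -> In y E -> In y F -> lt x y -> In x F.

(* F in F_{k+1} is G 0 \cup ... \cup G (n_{k+1}-1), with G i in F_k forming a
   Delta-system with root R, |R| = r_{k+1},
   R < G 0 \ R < ... < G (n_{k+1}-1) \ R *)
Definition decomposition {T : Type} (lt : T -> T -> Prop) (FF : list T -> Prop)
  (m nn r : nat -> nat) (k : nat) (F : list T) (G : nat -> list T) (R : list T)
  : Prop :=
  (forall i, i < nn (S k) -> level FF m k (G i)) /\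
  NoDup R /\ length R = r (S k) /\
  (forall i j x, i < nn (S k) -> j < nn (S k) -> i <> j ->
     (In x (G i) /\ In x (G j) <-> In x R)) /\
  (forall i x y, i < nn (S k) -> In x R -> In y (G i) -> ~ In y R -> lt x y) /\
  (forall i j x y, i < j -> j < nn (S k) ->
     In x (G i) -> ~ In x R -> In y (G j) -> ~ In y R -> lt x y) /\
  (forall x, In x F <-> exists i, i < nn (S k) /\ In x (G i)).

Definition construction_scheme {T : Type} (lt : T -> T -> Prop)
  (m nn r : nat -> nat) (FF : list T -> Prop) : Prop :=
  is_type m nn r /\
  (forall F, FF F -> F <> [] /\ StronglySorted lt F /\ exists k, length F = m k) /\
  (forall A : list T, exists F, FF F /\ incl A F) /\
  (forall k E F, level FF m k E -> level FF m k F ->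
     init_seg_in lt E F /\ init_seg_in lt F E) /\
  (forall k F, level FF m (S k) F -> exists G R, decomposition lt FF m nn r k F G R).

Definition rho_rel {T : Type} (FF : list T -> Prop) (m : nat -> nat)
  (a b : T) (k : nat) : Prop :=
  (exists F, level FF m k F /\ In a F /\ In b F) /\
  (forall j, j < k -> ~ exists F, level FF m j F /\ In a F /\ In b F).

Definition rho {T : Type} (FF : list T -> Prop) (m : nat -> nat) (a b : T) : nat :=
  epsilon (inhabits 0) (rho_rel FF m a b).

Definition card_rel {X : Type} (P : X -> Prop) (c : nat) : Prop :=
  exists l, NoDup l /\ (forall x, In x l <-> P x) /\ length l = c.

Definition card {X : Type} (P : X -> Prop) : nat := epsilon (inhabits 0) (card_rel P).

Definition norm {T : Type} (lt : T -> T -> Prop) (FF : list T -> Prop)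
  (m : nat -> nat) (a : T) (k : nat) : nat :=
  card (fun x => lt x a /\ rho FF m a x <= k).

Definition Delta {T : Type} (lt : T -> T -> Prop) (FF : list T -> Prop)
  (m : nat -> nat) (a b : T) : nat :=
  epsilon (inhabits 0) (fun k => norm lt FF m a k <> norm lt FF m b k /\
                                 forall j, j < k -> norm lt FF m a j = norm lt FF m b j).

Definition Xi_rel {T : Type} (lt : T -> T -> Prop) (FF : list T -> Prop)
  (m nn r : nat -> nat) (a : T) (k : nat) (v : Z) : Prop :=
  (k = 0 /\ v = 0%Z) \/
  exists k', k = S k' /\ exists F G R,
    level FF m (S k') F /\ In a F /\ decomposition lt FF m nn r k' F G R /\
    ((In a R /\ v = (-1)%Z) \/
     (~ In a R /\ exists i, i < nn (S k') /\ In a (G i) /\ v = Z.of_nat i)).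

Definition Xi {T : Type} (lt : T -> T -> Prop) (FF : list T -> Prop)
  (m nn r : nat -> nat) (a : T) (k : nat) : Z :=
  epsilon (inhabits 0%Z) (Xi_rel lt FF m nn r a k).

Definition Delta_captured {T : Type} (lt : T -> T -> Prop) (FF : list T -> Prop)
  (m nn r : nat -> nat) (l N : nat) (D : nat -> list T) : Prop :=
  2 <= N /\ exists (mm rr : nat) (R : list T),
   (forall j, j < N -> length (D j) = mm /\ StronglySorted lt (D j)) /\
   NoDup R /\ length R = rr /\
   (forall i j x, i < N -> j < N -> i <> j -> (In x (D i) /\ In x (D j) <-> In x R)) /\
   (forall j x y, j < N -> In x R -> In y (D j) -> ~ In y R -> lt x y) /\
   (forall i j, i < N -> j < N -> i <> j ->
      (forall x y, In x (D i) -> ~ In x R -> In y (D j) -> ~ In y R -> lt x y) \/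
      (forall x y, In x (D i) -> ~ In x R -> In y (D j) -> ~ In y R -> lt y x)) /\
   (forall j a x, j < N -> nth_error (D j) a = Some x ->
      (a < rr -> Xi lt FF m nn r x l = (-1)%Z) /\
      (rr <= a -> Xi lt FF m nn r x l = Z.of_nat j)) /\
   (forall i j a x y, i < N -> j < N -> i <> j -> rr <= a ->
      nth_error (D i) a = Some x -> nth_error (D j) a = Some y ->
      Delta lt FF m x y = l).

Definition fully_Delta_capturing {T : Type} (lt : T -> T -> Prop)
  (FF : list T -> Prop) (m nn r : nat -> nat) : Prop :=
  forall S : list T -> Prop,
    (forall s, S s -> StronglySorted lt s) ->
    uncountable_set S ->
    forall L, exists l, L < l /\ exists D : nat -> list T,
      (forall j, j < nn l -> S (D j)) /\
      (forall i j, i < nn l -> j < nn l -> D i = D j -> i = j) /\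
      Delta_captured lt FF m nn r l (nn l) D.

(* subsets of m_k \ r_{k+1} = {r_{k+1}, ..., m_k - 1} of size <= nE,
   represented as strictly increasing lists *)
Definition small_subset (m r : nat -> nat) (nE k : nat) (s : list nat) : Prop :=
  StronglySorted Nat.lt s /\ (forall x, In x s -> r (S k) <= x < m k) /\
  length s <= nE.

(* <C k i>_{0 < i < n_{k+1}} enumerates (with repetitions) [m_k \ r_{k+1}]^{<= nE} *)
Definition valid_enum (m nn r : nat -> nat) (nE : nat) (C : nat -> nat -> list nat)
  : Prop :=
  forall k,
    (forall i, 0 < i < nn (S k) -> small_subset m r nE k (C k i)) /\
    (forall s, small_subset m r nE k s -> exists i, 0 < i < nn (S k) /\ C k i = s).

Definition e_fun {T : Type} (lt : T -> T -> Prop) (FF : list T -> Prop)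
  (m nn r : nat -> nat) (nE : nat) (C : nat -> nat -> list nat) (a : T) (k : nat)
  : Z :=
  let x := Xi lt FF m nn r a k in
  if Z.leb x 0 then 0%Z else
  let Ck := C (Nat.pred k) (Z.to_nat x) in
  let na := norm lt FF m a (Nat.pred k) in
  if existsb (Nat.eqb na) Ck then x
  else if andb (Nat.eqb (length Ck) nE) (forallb (fun c => Nat.ltb na c) Ck) then x
  else (- x)%Z.

Definition lex_lt (f g : nat -> Z) : Prop :=
  exists k, (forall j, j < k -> f j = g j) /\ (f k < g k)%Z.

Definition entangled {X : Type} (ltX : X -> X -> Prop) (E : X -> Prop) (kk : nat)
  : Prop :=
  uncountable_set E /\
  forall (tau : nat -> bool) (A : list X -> Prop),
    (forall a, A a -> length a = kk /\ StronglySorted ltX a /\ forall x, In x a -> E x) ->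
    (forall a b, A a -> A b -> a <> b -> forall x, In x a -> ~ In x b) ->
    uncountable_set A ->
    exists a b, A a /\ A b /\ a <> b /\
      forall i x y, i < kk -> nth_error a i = Some x -> nth_error b i = Some y ->
        (ltX x y <-> tau i = false).

From Stdlib Require Import List ZArith Arith Lia Sorted Permutation Classical ClassicalEpsilon Cantor.
Import ListNotations.

(* If [E] were countable, uncountably many ordinals would share one value of
   [e]; Δ-capturing two of them at a level [l] gives [Ξ = 0] on one and
   [Ξ = 1] on the other, so their [e]-values differ at [l].

   For entangledness, lift an uncountable family of disjoint [2n]-tuples of [E]
   to tuples of ordinals, sort them, and thin the family out until the sorted
   tuples lie in level-[K] sets with a common pattern of positions.
   Δ-capturing [n_l] of them at a level [l > K] yields copies whose norms, hence
   whose [e]-values, agree below [l], while [Ξ] is [j] at [l] on the [j]-th copy.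
   So at [l] the function [e] vanishes on copy [0] and is [±d] on copy [d], with
   sign [+] exactly when [||α||_{l-1}] lies in [C^{l-1}_d], or below all of it
   with [|C^{l-1}_d| = n]. Choosing [d] so that [C^{l-1}_d] consists of the
   positions of the smaller τ-class of coordinates (the one containing the least
   position when both classes have [n] elements) makes copies [0] and [d], in
   the suitable order, realize τ. *)

Lemma StronglySorted_app_iff {A} (R : A -> A -> Prop) (l1 l2 : list A) :
  StronglySorted R (l1 ++ l2) <->
  StronglySorted R l1 /\ StronglySorted R l2 /\
  (forall a b, In a l1 -> In b l2 -> R a b).
Proof.
  induction l1 as [|x l1 IH]; simpl.
  - split; [intros H; split; [constructor|split; auto; tauto] | tauto].
  - split.
    + intros H; apply StronglySorted_inv in H as [H1 H2].
      apply IH in H1 as [Ha [Hb Hc]].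
      rewrite Forall_forall in H2.
      repeat split; auto.
      * constructor; auto. rewrite Forall_forall; intros; apply H2, in_or_app; auto.
      * intros a b [<-|Ha'] Hb'; auto. apply H2, in_or_app; auto.
    + intros [H1 [H2 H3]]. apply StronglySorted_inv in H1 as [H1a H1b].
      constructor.
      * apply IH; repeat split; auto.
      * rewrite Forall_forall in *; intros y Hy; apply in_app_or in Hy as [Hy|Hy]; auto.
Qed.

Lemma StronglySorted_filter {A} (R : A -> A -> Prop) f l :
  StronglySorted R l -> StronglySorted R (filter f l).
Proof.
  induction 1 as [|a l H IH HF]; simpl; [constructor|].
  destruct (f a); auto. constructor; auto.
  rewrite Forall_forall in *; intros y Hy; apply filter_In in Hy; apply HF; tauto.
Qed.

Lemma StronglySorted_seq a n : StronglySorted Nat.lt (seq a n).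
Proof.
  revert a; induction n; intros a; simpl; constructor; auto.
  rewrite Forall_forall; intros y Hy; apply in_seq in Hy; lia.
Qed.

Lemma StronglySorted_NoDup {A} (R : A -> A -> Prop) l :
  (forall x, ~ R x x) -> StronglySorted R l -> NoDup l.
Proof.
  intros Hirr; induction 1 as [|a l H IH HF]; constructor; auto.
  intros Hin; rewrite Forall_forall in HF; apply (Hirr a); auto.
Qed.

Lemma NoDup_length_eq {A} (l1 l2 : list A) :
  NoDup l1 -> NoDup l2 -> (forall x, In x l1 <-> In x l2) -> length l1 = length l2.
Proof. intros H1 H2 H; apply Permutation_length, NoDup_Permutation; auto. Qed.

Lemma ex_positions {A} (l s : list A) : incl l s ->
  exists p, forall i x, nth_error l i = Some x -> nth_error s (nth i p 0) = Some x.
Proof.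
  induction l as [|x l IH]; intros Hincl.
  - exists []; intros [|i] y H; discriminate.
  - destruct (In_nth_error s x) as [j Hj]; [apply Hincl; simpl; auto|].
    destruct IH as [p Hp]; [intros y Hy; apply Hincl; simpl; auto|].
    exists (j :: p); intros [|i] y H; simpl in H |- *; [congruence|auto].
Qed.

Lemma In_concat_map_seq {A} (Q : nat -> list A) i z :
  In z (concat (map Q (seq 0 i))) <-> exists t, t < i /\ In z (Q t).
Proof.
  rewrite in_concat. split.
  - intros [l [Hl Hz]]. apply in_map_iff in Hl as [t [<- Ht]]. apply in_seq in Ht.
    exists t; split; auto; lia.
  - intros [t [Ht Hz]]. exists (Q t); split; auto. apply in_map, in_seq; lia.
Qed.

Lemma concat_map_seq_S {A} (Q : nat -> list A) i :
  concat (map Q (seq 0 (S i))) = concat (map Q (seq 0 i)) ++ Q i.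
Proof. rewrite seq_S, map_app, concat_app; simpl; rewrite app_nil_r; auto. Qed.

Lemma length_concat_map_seq {A} (Q : nat -> list A) c i :
  (forall t, t < i -> length (Q t) = c) -> length (concat (map Q (seq 0 i))) = i * c.
Proof.
  induction i; intros H; auto.
  rewrite concat_map_seq_S, length_app, IHi, H; [lia|lia|]. intros; apply H; lia.
Qed.

Lemma concat_map_seq_split {A} (Q : nat -> list A) i n : i < n ->
  exists rest, concat (map Q (seq 0 n)) = concat (map Q (seq 0 i)) ++ Q i ++ rest.
Proof.
  intros H. replace n with (S i + (n - S i)) by lia.
  rewrite seq_app, map_app, concat_app, concat_map_seq_S, <- app_assoc.
  eexists; eauto.
Qed.

Lemma StronglySorted_concat_map_seq {A} (R : A -> A -> Prop) (Q : nat -> list A) n :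
  (forall t, t < n -> StronglySorted R (Q t)) ->
  (forall t t' a b, t < t' < n -> In a (Q t) -> In b (Q t') -> R a b) ->
  StronglySorted R (concat (map Q (seq 0 n))).
Proof.
  intros Hs Hlt. induction n as [|n IH]; [constructor|].
  rewrite concat_map_seq_S. apply StronglySorted_app_iff. split; [|split; [apply Hs; lia|]].
  - apply IH; intros; [apply Hs|apply (Hlt t t')]; auto; lia.
  - intros a b Ha Hb. apply In_concat_map_seq in Ha as [t [Ht Ha]]. apply (Hlt t n); auto; lia.
Qed.

Section StrictTotalOrder.
Context {A : Type} (R : A -> A -> Prop)
  (R_irrefl : forall x, ~ R x x) (R_trans : forall x y z, R x y -> R y z -> R x z)
  (R_total : forall x y, R x y \/ x = y \/ R y x).

Lemma StronglySorted_eq l1 l2 :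
  StronglySorted R l1 -> StronglySorted R l2 -> (forall x, In x l1 <-> In x l2) -> l1 = l2.
Proof.
  revert l2; induction l1 as [|a l1 IH]; intros l2 H1 H2 H.
  - destruct l2 as [|b l2]; auto. exfalso; apply (proj2 (H b)); simpl; auto.
  - destruct l2 as [|b l2]. { exfalso; apply (proj1 (H a)); simpl; auto. }
    apply StronglySorted_inv in H1 as [H1 F1]; apply StronglySorted_inv in H2 as [H2 F2].
    rewrite Forall_forall in F1, F2.
    assert (a = b) as <-.
    { destruct (proj1 (H a) (or_introl eq_refl)) as [->|Ha]; auto.
      destruct (proj2 (H b) (or_introl eq_refl)) as [->|Hb]; auto.
      exfalso; apply (R_irrefl a); apply R_trans with b; auto. }
    f_equal; apply IH; auto.
    intros x; split; intros Hx.
    + destruct (proj1 (H x) (or_intror Hx)) as [->|]; auto.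
      exfalso; apply (R_irrefl x); auto.
    + destruct (proj2 (H x) (or_intror Hx)) as [->|]; auto.
      exfalso; apply (R_irrefl x); auto.
Qed.

Lemma ex_sorted_insert x s : StronglySorted R s ->
  exists s', StronglySorted R s' /\ forall y, In y s' <-> y = x \/ In y s.
Proof.
  induction 1 as [|h s H IH HF].
  - exists [x]; split; [repeat constructor|]. simpl; intuition.
  - destruct (R_total x h) as [Hxh|[<-|Hhx]].
    + exists (x :: h :: s); split.
      * constructor; [constructor; auto|].
        constructor; auto. rewrite Forall_forall in *; intros; eauto.
      * simpl; intuition.
    + exists (x :: s); split; [constructor; auto|]; simpl; intuition.
    + destruct IH as [s3 [Hs3 Hm]]. exists (h :: s3); split.
      * constructor; auto. rewrite Forall_forall in *; intros y Hy.
        apply Hm in Hy as [->|Hy]; auto.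
      * intros y; simpl; rewrite Hm; intuition.
Qed.

Lemma ex_sorted_perm l : exists s, StronglySorted R s /\ forall x, In x s <-> In x l.
Proof.
  induction l as [|x l IH].
  - exists []; split; [constructor|simpl; tauto].
  - destruct IH as [s [Hs Hm]]. destruct (ex_sorted_insert x s Hs) as [s' [Hs' Hm']].
    exists s'; split; auto. intros y; rewrite Hm', Hm; simpl; intuition.
Qed.

Lemma ex_max l : l <> [] -> exists f, In f l /\ forall x, In x l -> x = f \/ R x f.
Proof.
  induction l as [|a l IH]; intros Hne; [congruence|].
  destruct l as [|b l'].
  - exists a; simpl; intuition.
  - destruct IH as [f [Hf Hm]]; [discriminate|].
    destruct (R_total a f) as [Haf|[<-|Hfa]].
    + exists f; split; [right; auto|]. intros x [<-|Hx]; auto.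
    + exists a; split; [left; auto|]. intros x [<-|Hx]; auto.
    + exists a; split; [left; auto|]. intros x [<-|Hx]; auto.
      destruct (Hm x Hx) as [->|]; eauto.
Qed.

Lemma ex_sorted_prefix_split G (P : A -> Prop) :
  StronglySorted R G ->
  (forall y z, P y -> In z G -> ~ P z -> R y z) ->
  exists L1 L2, G = L1 ++ L2 /\ (forall y, In y L1 -> P y) /\ (forall z, In z L2 -> ~ P z).
Proof.
  induction 1 as [|h s H IH HF]; intros Hp.
  - exists [], []; simpl; intuition.
  - destruct (classic (P h)) as [Ph|nPh].
    + destruct IH as [L1 [L2 [E [H1 H2]]]].
      { intros y z Py Hz nPz; apply Hp; simpl; auto. }
      exists (h :: L1), L2; subst; simpl; intuition (subst; auto).
    + exists [], (h :: s); simpl; split; auto; split; [tauto|].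
      intros z [<-|Hz] Pz; [exact (nPh Pz)|].
      rewrite Forall_forall in HF.
      apply (R_irrefl h); apply R_trans with z; [apply HF; exact Hz|].
      apply Hp; simpl; auto.
Qed.

End StrictTotalOrder.

Lemma ex_least_nat (P : nat -> Prop) :
  (exists n, P n) -> exists n, P n /\ forall j, j < n -> ~ P j.
Proof.
  intros [n Hn]. induction n as [n IH] using (well_founded_induction lt_wf).
  destruct (classic (exists j, j < n /\ P j)) as [[j [Hj Pj]]|Hno].
  - apply (IH j Hj Pj).
  - exists n; split; auto. intros j Hj Pj; apply Hno; eauto.
Qed.

Lemma ex_argmin_below (f : nat -> nat) N :
  0 < N -> exists i0, i0 < N /\ forall i, i < N -> f i0 <= f i.
Proof.
  induction N as [|N IH]; intros H; [lia|].
  destruct (Nat.eq_dec N 0) as [->|HN].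
  - exists 0; split; auto; intros i Hi; replace i with 0 by lia; auto.
  - destruct IH as [i0 [Hi0 Hm]]; [lia|].
    destruct (le_lt_dec (f i0) (f N)).
    + exists i0; split; [lia|]. intros i Hi.
      destruct (Nat.eq_dec i N); [subst; auto|apply Hm; lia].
    + exists N; split; [lia|]. intros i Hi.
      destruct (Nat.eq_dec i N); [subst; auto|]. specialize (Hm i ltac:(lia)); lia.
Qed.

Lemma uncountable_inhabited {X} (S : X -> Prop) : uncountable_set S -> exists x, S x.
Proof.
  intros HU. apply NNPP; intros Hno. apply HU.
  exists (fun _ => 0). intros x y Hx; exfalso; eauto.
Qed.

Lemma uncountable_lists_length_pos {X} (A : list X -> Prop) N :
  (forall a, A a -> length a = N) -> uncountable_set A -> 0 < N.
Proof.
  intros HA HU. destruct N; [|lia]. exfalso. apply HU. exists (fun _ => 0).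
  intros a a' Ha Ha' _. apply HA in Ha, Ha'. apply length_zero_iff_nil in Ha, Ha'. congruence.
Qed.

Lemma uncountable_image {X Y} (S : X -> Prop) (f : X -> Y) :
  (forall x y, S x -> S y -> f x = f y -> x = y) ->
  uncountable_set S -> uncountable_set (fun z => exists x, S x /\ z = f x).
Proof.
  intros Hinj HU [g Hg]. apply HU. exists (fun x => g (f x)).
  intros x y Hx Hy E. apply Hinj; auto. apply Hg; eauto.
Qed.

Lemma uncountable_fiber {X Y} (S : X -> Prop) (g : X -> Y) :
  countable_set (fun _ : Y => True) -> uncountable_set S ->
  exists y, uncountable_set (fun x => S x /\ g x = y).
Proof.
  intros [code Hcode] HU. apply NNPP; intros Hno.
  assert (Hall : forall y, countable_set (fun x => S x /\ g x = y)).
  { intros y. apply NNPP; intros Hy; apply Hno; exists y; exact Hy. }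
  apply HU.
  set (P := fun y (f : X -> nat) =>
         forall u v, S u /\ g u = y -> S v /\ g v = y -> f u = f v -> u = v).
  set (F := fun y => epsilon (inhabits (fun _ : X => 0)) (P y)).
  assert (HF : forall y, P y (F y)) by (intros y; apply epsilon_spec, Hall).
  exists (fun x => Cantor.to_nat (code (g x), F (g x) x)).
  intros x y Hx Hy E.
  apply (f_equal Cantor.of_nat) in E. rewrite !Cantor.cancel_of_to in E.
  injection E as E1 E2. apply Hcode in E1; auto.
  apply (HF (g y)); auto. rewrite <- E1 at 1. exact E2.
Qed.

Lemma ex_lifted_family {X Y} (e : Y -> X) (A : list X -> Prop) :
  (forall a, A a -> forall x, In x a -> exists y, x = e y) -> uncountable_set A ->
  exists B : list Y -> Prop, uncountable_set B /\ (forall b, B b -> A (map e b)) /\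
    (forall b b', B b -> B b' -> map e b = map e b' -> b = b').
Proof.
  intros Hrange HU.
  set (lift := fun a => epsilon (inhabits []) (fun b => a = map e b)).
  assert (Hlift : forall a, A a -> a = map e (lift a)).
  { intros a Ha. apply (epsilon_spec (inhabits []) (fun b => a = map e b)).
    specialize (Hrange a Ha). clear Ha. induction a as [|x a IH]; [exists []; auto|].
    destruct (Hrange x (or_introl eq_refl)) as [y ->].
    destruct IH as [b ->]; [intros; apply Hrange; simpl; auto|]. exists (y :: b); auto. }
  exists (fun b => exists a, A a /\ b = lift a). split; [|split].
  - apply uncountable_image; auto. intros a a' Ha Ha' E. rewrite (Hlift a), (Hlift a'), E; auto.
  - intros b [a [Ha ->]]. rewrite <- Hlift; auto.
  - intros b b' [a [Ha ->]] [a' [Ha' ->]] E. rewrite <- !Hlift in E; auto. subst; auto.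
Qed.

Fixpoint list_nat_code (l : list nat) : nat :=
  match l with [] => 0 | x :: l => S (Cantor.to_nat (x, list_nat_code l)) end.

Lemma countable_nat : countable_set (fun _ : nat => True).
Proof. exists (fun n => n); auto. Qed.

Lemma countable_list_nat : countable_set (fun _ : list nat => True).
Proof.
  exists list_nat_code. intros l1 l2 _ _; revert l2.
  induction l1 as [|x l1 IH]; intros [|y l2] E; try discriminate; auto.
  cbn [list_nat_code] in E. apply Nat.succ_inj in E.
  apply (f_equal Cantor.of_nat) in E. rewrite !Cantor.cancel_of_to in E.
  injection E as -> E. f_equal; auto.
Qed.

(** * Lexicographic order and sign patterns *)

Lemma lex_lt_irrefl f : ~ lex_lt f f.
Proof. intros [k [_ H]]; lia. Qed.

Lemma lex_lt_first_difference (f g : nat -> Z) k :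
  (forall j, j < k -> f j = g j) -> (f k < g k)%Z -> lex_lt f g /\ ~ lex_lt g f.
Proof.
  intros Hb Hk. split; [exists k; auto|].
  intros [j [Hj Hlt]]. destruct (lt_eq_lt_dec j k) as [[H|<-]|H].
  - rewrite (Hb j H) in Hlt; lia.
  - lia.
  - rewrite (Hj k H) in Hk; lia.
Qed.

Lemma lex_lt_signed_at (f g : nat -> Z) k (c : bool) (d : Z) :
  (forall j, j < k -> f j = g j) -> f k = 0%Z -> (0 < d)%Z ->
  g k = (if c then d else - d)%Z ->
  (lex_lt f g <-> c = true) /\ (lex_lt g f <-> c = false).
Proof.
  intros Hb Hf Hd Hg. destruct c.
  - destruct (lex_lt_first_difference f g k) as [H1 H2]; auto; [lia|].
    split; split; auto; congruence.
  - destruct (lex_lt_first_difference g f k) as [H1 H2]; [intros j Hj; symmetry; auto|lia|].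
    split; split; auto; congruence.
Qed.

(* The condition under which [e_fun] keeps the sign of a positive [Xi]
   (see [e_fun_Xi_pos]). *)
Definition sign_test (nE : nat) (s : list nat) (v : nat) : bool :=
  orb (existsb (Nat.eqb v) s) (andb (Nat.eqb (length s) nE) (forallb (Nat.ltb v) s)).

Definition class_size (tau : nat -> bool) (N : nat) (b : bool) : nat :=
  length (filter (fun i => Bool.eqb (tau i) b) (seq 0 N)).

Lemma ex_small_class nE (tau : nat -> bool) i0 :
  exists b, class_size tau (2 * nE) b <= nE /\
    (class_size tau (2 * nE) b = nE -> Bool.eqb (tau i0) b = true).
Proof.
  assert (Hsum : class_size tau (2 * nE) false + class_size tau (2 * nE) true = 2 * nE).
  { unfold class_size.
    rewrite (filter_ext (fun i => Bool.eqb (tau i) true) (fun i => negb (Bool.eqb (tau i) false)))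
      by (intros i; destruct (tau i); reflexivity).
    rewrite filter_length, length_seq. reflexivity. }
  destruct (lt_eq_lt_dec (class_size tau (2 * nE) false) nE) as [[Hlt|Heq]|Hgt].
  - exists false; split; [lia|intros; lia].
  - exists (tau i0); rewrite Bool.eqb_reflx; destruct (tau i0); split; auto; lia.
  - exists true; split; [lia|intros; lia].
Qed.

(* When [s] has [nE] elements it contains [p i0], the least value of [p], so the
   second clause of [sign_test] fails off the class [q]. *)
Lemma sign_test_image nE N (q : nat -> bool) (p : nat -> nat) lo hi i0 :
  (forall i, i < N -> lo <= p i < hi) ->
  (forall i i', i < N -> i' < N -> p i = p i' -> i = i') ->
  i0 < N -> (forall i, i < N -> p i0 <= p i) ->
  length (filter q (seq 0 N)) <= nE ->
  (length (filter q (seq 0 N)) = nE -> q i0 = true) ->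
  exists s, StronglySorted Nat.lt s /\ (forall x, In x s -> lo <= x < hi) /\
    length s <= nE /\ forall i, i < N -> sign_test nE s (p i) = q i.
Proof.
  intros Hrange Hinj Hi0 Hmin Hcount Hfull.
  set (s := filter (fun v => existsb (fun i => andb (q i) (Nat.eqb (p i) v)) (seq 0 N)) (seq 0 hi)).
  assert (Hs : forall v, In v s <-> exists i, i < N /\ q i = true /\ p i = v).
  { intros v. unfold s. rewrite filter_In, existsb_exists. split.
    - intros [_ [i [Hi H]]]. apply andb_prop in H as [H1 H2]. apply in_seq in Hi.
      apply Nat.eqb_eq in H2. exists i; split; [lia|auto].
    - intros [i [Hi [Hq <-]]]. split; [apply in_seq; pose proof (Hrange i Hi); lia|].
      exists i; split; [apply in_seq; lia|]. rewrite Hq, Nat.eqb_refl; auto. }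
  assert (Hlen : length s <= length (filter q (seq 0 N))).
  { rewrite <- (length_map p (filter q (seq 0 N))). apply NoDup_incl_length.
    - apply NoDup_filter, seq_NoDup.
    - intros v Hv. apply Hs in Hv as [i [Hi [Hq <-]]]. apply in_map, filter_In.
      split; auto. apply in_seq; lia. }
  exists s; split; [apply StronglySorted_filter, StronglySorted_seq|].
  split; [intros v Hv; apply Hs in Hv as [i [Hi [_ <-]]]; auto|].
  split; [lia|].
  intros i Hi. unfold sign_test. destruct (q i) eqn:Hq.
  - apply Bool.orb_true_iff; left. apply existsb_exists.
    exists (p i); split; [apply Hs; eauto|apply Nat.eqb_refl].
  - apply Bool.orb_false_iff; split.
    + apply Bool.not_true_iff_false. intros H. apply existsb_exists in H as [v [Hv Hpv]].
      apply Nat.eqb_eq in Hpv; subst v. apply Hs in Hv as [i' [Hi' [Hq' Ep]]].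
      rewrite (Hinj i' i) in Hq'; auto. congruence.
    + apply Bool.not_true_iff_false. intros H. apply andb_prop in H as [H1 H2].
      apply Nat.eqb_eq in H1. rewrite forallb_forall in H2.
      assert (Hp0 : In (p i0) s).
      { apply Hs; exists i0; split; auto; split; auto. apply Hfull; lia. }
      specialize (H2 _ Hp0). apply Nat.ltb_lt in H2. specialize (Hmin i Hi). lia.
Qed.

Lemma ex_sign_pattern nE (tau : nat -> bool) (p : nat -> nat) lo hi :
  0 < nE ->
  (forall i, i < 2 * nE -> lo <= p i < hi) ->
  (forall i i', i < 2 * nE -> i' < 2 * nE -> p i = p i' -> i = i') ->
  exists b s, StronglySorted Nat.lt s /\ (forall x, In x s -> lo <= x < hi) /\
    length s <= nE /\ forall i, i < 2 * nE -> sign_test nE s (p i) = Bool.eqb (tau i) b.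
Proof.
  intros HnE Hrange Hinj.
  destruct (ex_argmin_below p (2 * nE)) as [i0 [Hi0 Hmin]]; [lia|].
  destruct (ex_small_class nE tau i0) as [b [Hle Hfull]].
  destruct (sign_test_image nE (2 * nE) (fun i => Bool.eqb (tau i) b) p lo hi i0)
    as [s Hs]; auto.
  exists b, s; exact Hs.
Qed.

(** * Construction schemes *)

Section ConstructionScheme.
Variables (T : Type) (lt : T -> T -> Prop) (m nn r : nat -> nat) (FF : list T -> Prop).
Hypothesis Homega1 : is_omega1 lt.
Hypothesis Hscheme : construction_scheme lt m nn r FF.

Let lt_irrefl := o1_irrefl lt Homega1.
Let lt_trans := o1_trans lt Homega1.
Let lt_total := o1_total lt Homega1.

Lemma scheme_type_succ k :
  2 <= nn (S k) /\ r (S k) < m k /\ m (S k) = r (S k) + (m k - r (S k)) * nn (S k).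
Proof. destruct Hscheme as [[_ H] _]; apply H. Qed.

Lemma m_lt_succ k : m k < m (S k).
Proof. destruct (scheme_type_succ k) as [H1 [H2 H3]]. rewrite H3. nia. Qed.

Lemma m_le_mono k h : k <= h -> m k <= m h.
Proof. induction 1 as [|h _ IH]; auto. pose proof (m_lt_succ h); lia. Qed.

Lemma lt_of_m_lt k h : m k < m h -> k < h.
Proof. intros H. destruct (le_lt_dec h k) as [Hle|]; auto. apply m_le_mono in Hle; lia. Qed.

Lemma scheme_member F : FF F -> F <> [] /\ StronglySorted lt F /\ exists k, length F = m k.
Proof. destruct Hscheme as [_ [H _]]; auto. Qed.

Lemma scheme_cofinal X : exists F, FF F /\ incl X F.
Proof. destruct Hscheme as [_ [_ [H _]]]; auto. Qed.

Lemma level_init_seg k E F : level FF m k E -> level FF m k F -> init_seg_in lt E F.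
Proof. destruct Hscheme as [_ [_ [_ [H _]]]]; intros HE HF; apply (H k E F HE HF). Qed.

Lemma level_decomposition k F :
  level FF m (S k) F -> exists G R, decomposition lt FF m nn r k F G R.
Proof. destruct Hscheme as [_ [_ [_ [_ H]]]]; auto. Qed.

Lemma level_StronglySorted k F : level FF m k F -> StronglySorted lt F.
Proof. intros [H _]; apply scheme_member; auto. Qed.

Lemma level_NoDup k F : level FF m k F -> NoDup F.
Proof. intros H; apply (StronglySorted_NoDup lt); auto. apply (level_StronglySorted k); auto. Qed.

Lemma level_down_succ k F x : level FF m (S k) F -> In x F ->
  exists E, level FF m k E /\ incl E F /\ In x E.
Proof.
  intros HF Hx. destruct (level_decomposition k F HF) as [G [R D]].
  destruct D as [D1 [_ [_ [_ [_ [_ D7]]]]]].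
  destruct (proj1 (D7 x) Hx) as [i [Hi Hxi]].
  exists (G i); split; auto; split; auto.
  intros y Hy; apply D7; eauto.
Qed.

Lemma level_down h k F x : level FF m h F -> k <= h -> In x F ->
  exists E, level FF m k E /\ incl E F /\ In x E.
Proof.
  intros HF Hkh; revert F x HF. induction Hkh as [|h Hkh IH]; intros F x HF Hx.
  - exists F; split; auto; split; auto. intros y; auto.
  - destruct (level_down_succ h F x HF Hx) as [E [HE [Hi Hx']]].
    destruct (IH E x HE Hx') as [E' [HE' [Hi' Hx'']]].
    exists E'; split; auto; split; auto. intros y Hy; auto.
Qed.

Lemma ex_not_In (X : list T) : exists z, ~ In z X.
Proof.
  apply NNPP; intros Hn.
  apply (o1_uncountable lt Homega1).
  exists (fun x => epsilon (inhabits 0) (fun i => nth_error X i = Some x)).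
  intros x y _ _ E.
  assert (Hx : In x X) by (apply NNPP; intros H; apply Hn; eauto).
  assert (Hy : In y X) by (apply NNPP; intros H; apply Hn; eauto).
  apply In_nth_error in Hx, Hy.
  pose proof (epsilon_spec (inhabits 0) (fun i => nth_error X i = Some x) Hx) as Ex.
  pose proof (epsilon_spec (inhabits 0) (fun i => nth_error X i = Some y) Hy) as Ey.
  simpl in Ex, Ey. rewrite E in Ex. congruence.
Qed.

(* Cover [F] together with a new point by a member of the scheme, which then has
   a higher level, and go down to level [S k] at the maximum of [F]; coherence
   puts all of [F] below that maximum into the result. *)
Lemma level_up_succ k F : level FF m k F -> exists F', level FF m (S k) F' /\ incl F F'.
Proof.
  intros HF. destruct (ex_not_In F) as [z Hz].
  destruct (scheme_cofinal (z :: F)) as [H [HH Hinc]].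
  destruct (scheme_member H HH) as [_ [_ [h Hh]]].
  assert (Hkh : S k <= h).
  { apply lt_of_m_lt. rewrite <- (proj2 HF), <- Hh.
    change (length (z :: F) <= length H). apply NoDup_incl_length; auto.
    constructor; [exact Hz|apply (level_NoDup k); exact HF]. }
  destruct (ex_max lt lt_trans lt_total F) as [f [Hf Hmax]];
    [apply (scheme_member F (proj1 HF))|].
  destruct (level_down h (S k) H f (conj HH Hh) Hkh (Hinc f (or_intror Hf)))
    as [E' [HE' [_ HfE']]].
  destruct (level_down_succ k E' f HE' HfE') as [E [HE [HEi HfE]]].
  exists E'; split; auto. intros x Hx. apply HEi.
  destruct (Hmax x Hx) as [->|Hxf]; auto.
  apply (level_init_seg k F E HF HE x f); auto.
Qed.

Lemma level_up k h F : level FF m k F -> k <= h -> exists F', level FF m h F' /\ incl F F'.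
Proof.
  intros HF Hkh; induction Hkh as [|h Hkh IH].
  - exists F; split; auto; intros y; auto.
  - destruct IH as [F1 [H1 I1]]. destruct (level_up_succ h F1 H1) as [F2 [H2 I2]].
    exists F2; split; auto. intros y Hy; auto.
Qed.

Lemma ex_level_incl X : exists k F, level FF m k F /\ incl X F.
Proof.
  destruct (scheme_cofinal X) as [F [HF Hi]].
  destruct (scheme_member F HF) as [_ [_ [k Hk]]].
  exists k, F; split; auto; split; auto.
Qed.

Lemma ex_level_In x k : exists F, level FF m k F /\ In x F.
Proof.
  destruct (ex_level_incl [x]) as [h [F [HF Hi]]].
  assert (Hx : In x F) by (apply Hi; simpl; auto).
  destruct (le_lt_dec k h) as [Hkh|Hhk].
  - destruct (level_down h k F x HF Hkh Hx) as [E [HE [_ HxE]]]; eauto.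
  - destruct (level_up h k F HF) as [F' [HF' Hi']]; [lia|]. eauto.
Qed.

Lemma rho_spec x y : rho_rel FF m x y (rho FF m x y).
Proof.
  unfold rho. apply epsilon_spec.
  destruct (ex_level_incl [x; y]) as [h [F [HF Hi]]].
  destruct (ex_least_nat (fun k => exists F, level FF m k F /\ In x F /\ In y F))
    as [k [Hk Hl]].
  { exists h, F; split; auto; split; apply Hi; simpl; auto. }
  exists k; split; auto.
Qed.

Lemma rho_le_level k F x y : level FF m k F -> In x F -> In y F -> rho FF m x y <= k.
Proof.
  intros HF Hx Hy. destruct (rho_spec x y) as [_ H].
  destruct (le_lt_dec (rho FF m x y) k); auto. exfalso; apply (H k); eauto.
Qed.

Lemma ex_level_of_rho_le k x y : rho FF m x y <= k ->
  exists F, level FF m k F /\ In x F /\ In y F.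
Proof.
  intros Hle. destruct (rho_spec x y) as [[E [HE [Hx Hy]]] _].
  destruct (level_up _ k E HE Hle) as [F [HF Hi]]. exists F; auto.
Qed.

Lemma norm_level k F x L1 L2 : level FF m k F -> F = L1 ++ x :: L2 -> norm lt FF m x k = length L1.
Proof.
  intros HF E. unfold norm, card.
  assert (Hs := level_StronglySorted k F HF).
  assert (Hmem : forall z, In z L1 <-> lt z x /\ rho FF m x z <= k).
  { intros z; split.
    - intros Hz. split.
      + subst F. apply StronglySorted_app_iff in Hs. apply Hs; simpl; auto.
      + apply (rho_le_level k F); [exact HF| |]; subst F; apply in_or_app; simpl; auto.
    - intros [Hzx Hr]. destruct (ex_level_of_rho_le k x z Hr) as [E' [HE' [HxE HzE]]].
      assert (HzF : In z F).
      { apply (level_init_seg k E' F HE' HF z x); auto. subst F; apply in_or_app; simpl; auto. }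
      subst F. apply StronglySorted_app_iff in Hs as [_ [Hs2 _]].
      apply StronglySorted_inv in Hs2 as [_ Hf]. rewrite Forall_forall in Hf.
      apply in_app_or in HzF as [H|[H|H]]; auto; exfalso.
      + subst z; apply (lt_irrefl x); auto.
      + apply (lt_irrefl z). eauto. }
  assert (HL1 : NoDup L1).
  { apply (StronglySorted_NoDup lt); auto. subst F; apply StronglySorted_app_iff in Hs; apply Hs. }
  assert (Hc : card_rel (fun z => lt z x /\ rho FF m x z <= k) (length L1)).
  { exists L1; split; auto. }
  destruct (epsilon_spec (inhabits 0) (card_rel (fun z => lt z x /\ rho FF m x z <= k))
    (ex_intro _ _ Hc)) as [l' [Hnd' [Hm' <-]]].
  apply NoDup_length_eq; auto. intros z; rewrite Hm', Hmem; tauto.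
Qed.

Lemma norm_level_inj k F x y : level FF m k F -> In x F -> In y F ->
  norm lt FF m x k = norm lt FF m y k -> x = y.
Proof.
  intros HF Hx Hy E.
  apply in_split in Hx as [A [B EA]]. apply in_split in Hy as [A' [B' EA']].
  rewrite (norm_level k F x A B), (norm_level k F y A' B') in E; auto.
  assert (Hx : nth_error F (length A) = Some x) by (rewrite EA, nth_error_app2, Nat.sub_diag; auto).
  assert (Hy : nth_error F (length A') = Some y) by (rewrite EA', nth_error_app2, Nat.sub_diag; auto).
  congruence.
Qed.

Lemma decomposition_root_prefix k F G R : decomposition lt FF m nn r k F G R ->
  exists P, (forall y, In y P <-> In y R) /\ length P = r (S k) /\
  forall t, t < nn (S k) -> exists Q, G t = P ++ Q /\
    length Q = m k - r (S k) /\ (forall z, In z Q -> ~ In z R).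
Proof.
  intros HD. pose proof HD as [D1 [D2 [D3 [D4 [D5 _]]]]].
  assert (Hn : 2 <= nn (S k)) by apply scheme_type_succ.
  assert (Hpre : forall t, t < nn (S k) -> exists L1 L2, G t = L1 ++ L2 /\
     StronglySorted lt L1 /\ (forall y, In y L1 <-> In y R) /\ (forall z, In z L2 -> ~ In z R)).
  { intros t Ht. assert (Hs := level_StronglySorted k (G t) (D1 t Ht)).
    destruct (ex_sorted_prefix_split lt lt_irrefl lt_trans (G t) (fun y => In y R) Hs)
      as [L1 [L2 [E [H1 H2]]]].
    { intros y z Hy Hz Hnz; apply (D5 t); auto. }
    exists L1, L2; split; auto.
    split; [rewrite E in Hs; apply StronglySorted_app_iff in Hs; apply Hs|].
    split; auto. intros y; split; auto. intros Hy.
    assert (Hj : exists j, j < nn (S k) /\ t <> j)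
      by (exists (if Nat.eqb t 0 then 1 else 0); destruct (Nat.eqb_spec t 0); lia).
    destruct Hj as [j [Hj Htj]].
    assert (HyG : In y (G t)) by apply (proj2 (D4 t j y Ht Hj Htj) Hy).
    rewrite E in HyG. apply in_app_or in HyG as [|HyG]; auto.
    exfalso; apply (H2 y); auto. }
  destruct (Hpre 0 ltac:(lia)) as [P [L2 [E0 [HPs [HPm _]]]]].
  assert (HPl : length P = r (S k)).
  { rewrite <- D3. apply NoDup_length_eq; auto. apply (StronglySorted_NoDup lt); auto. }
  exists P; split; auto; split; auto.
  intros t Ht. destruct (Hpre t Ht) as [L1 [Q [Et [H1s [H1m HQ]]]]].
  assert (L1 = P) as ->.
  { apply (StronglySorted_eq lt lt_irrefl lt_trans); auto. intros y; rewrite H1m, HPm; tauto. }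
  exists Q; split; auto; split; auto.
  destruct (D1 t Ht) as [_ Hlen]. rewrite Et, length_app in Hlen. lia.
Qed.

Lemma decomposition_blocks k F G R : level FF m (S k) F -> decomposition lt FF m nn r k F G R ->
  exists P, (forall y, In y P <-> In y R) /\ length P = r (S k) /\
  (forall t, t < nn (S k) -> G t = P ++ skipn (length P) (G t) /\
     length (skipn (length P) (G t)) = m k - r (S k) /\
     (forall z, In z (skipn (length P) (G t)) -> ~ In z R)) /\
  F = P ++ concat (map (fun t => skipn (length P) (G t)) (seq 0 (nn (S k)))).
Proof.
  intros HF HD. destruct (decomposition_root_prefix k F G R HD) as [P [HPm [HPl HQ]]].
  pose proof HD as [D1 [_ [_ [_ [D5 [D6 D7]]]]]].
  set (Q := fun t => skipn (length P) (G t)).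
  assert (HG : forall t, t < nn (S k) -> G t = P ++ Q t /\
     length (Q t) = m k - r (S k) /\ (forall z, In z (Q t) -> ~ In z R)).
  { intros t Ht. destruct (HQ t Ht) as [Q' [E HQ']].
    assert (Q t = Q') as -> by (unfold Q; rewrite E, skipn_app, Nat.sub_diag, skipn_all; auto).
    auto. }
  exists P; split; auto; split; auto; split; [exact HG|].
  assert (Hn : 0 < nn (S k)) by (pose proof (scheme_type_succ k); lia).
  assert (HPs : StronglySorted lt P).
  { pose proof (level_StronglySorted k (G 0) (D1 0 Hn)) as Hs.
    rewrite (proj1 (HG 0 Hn)) in Hs. apply StronglySorted_app_iff in Hs; apply Hs. }
  assert (HQs : forall t, t < nn (S k) -> StronglySorted lt (Q t)).
  { intros t Ht. assert (Hs := level_StronglySorted k (G t) (D1 t Ht)).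
    rewrite (proj1 (HG t Ht)) in Hs. apply StronglySorted_app_iff in Hs; apply Hs. }
  assert (HQG : forall t z, t < nn (S k) -> In z (Q t) -> In z (G t) /\ ~ In z R).
  { intros t z Ht Hz. split; [|apply (HG t Ht); auto].
    rewrite (proj1 (HG t Ht)); apply in_or_app; auto. }
  assert (Hcc : StronglySorted lt (concat (map Q (seq 0 (nn (S k)))))).
  { apply StronglySorted_concat_map_seq; auto. intros t t' a b Ht Ha Hb.
    apply (HQG t a) in Ha; [|lia]. apply (HQG t' b) in Hb; [|lia].
    apply (D6 t t' a b); tauto || lia. }
  apply (StronglySorted_eq lt lt_irrefl lt_trans).
  - apply (level_StronglySorted (S k)); auto.
  - apply StronglySorted_app_iff; split; auto; split; auto.
    intros a b Ha Hb. apply In_concat_map_seq in Hb as [t [Htl Hb]].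
    apply (HQG t b) in Hb; auto. apply (D5 t); tauto || (apply HPm; auto).
  - intros z; rewrite D7; split.
    + intros [i [Hi Hz]]. rewrite (proj1 (HG i Hi)) in Hz.
      apply in_app_or in Hz as [Hz|Hz]; apply in_or_app; [auto|].
      right; apply In_concat_map_seq; eauto.
    + intros Hz; apply in_app_or in Hz as [Hz|Hz].
      * exists 0; split; auto. rewrite (proj1 (HG 0 Hn)); apply in_or_app; auto.
      * apply In_concat_map_seq in Hz as [t [Htl Hz]]. exists t; split; auto. apply HQG; auto.
Qed.

(* A level-[S k] set lists its root first, then the [nn (S k)] tails of length
   [m k - r (S k)]. *)
Definition Xi_of_position (k p : nat) : Z :=
  if Nat.ltb p (r (S k)) then (-1)%Z else Z.of_nat ((p - r (S k)) / (m k - r (S k))).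

Lemma Xi_rel_position x k v :
  Xi_rel lt FF m nn r x (S k) v -> v = Xi_of_position k (norm lt FF m x (S k)).
Proof.
  intros [[H _]|[k' [Ek [F [G [R [HF [Hx [HD Hv]]]]]]]]]; [discriminate|].
  injection Ek as <-.
  destruct (decomposition_blocks k F G R HF HD) as [P [HPm [HPl [HG EF]]]].
  set (Q := fun t => skipn (length P) (G t)) in *.
  unfold Xi_of_position.
  destruct Hv as [[HxR ->]|[HxR [i [Hi [HxG ->]]]]].
  - apply HPm in HxR. apply in_split in HxR as [A [B EP]].
    rewrite (norm_level (S k) F x A (B ++ concat (map Q (seq 0 (nn (S k)))))); auto.
    + assert (length A < r (S k)) by (rewrite <- HPl, EP, length_app; simpl; lia).
      destruct (Nat.ltb_spec (length A) (r (S k))); auto; lia.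
    + rewrite EF, EP, <- app_assoc; auto.
  - destruct (HG i Hi) as [EG [HQl HQn]]. fold (Q i) in EG, HQl.
    assert (HxQ : In x (Q i)).
    { rewrite EG in HxG. apply in_app_or in HxG as [H|H]; auto. exfalso; apply HxR, HPm; auto. }
    apply in_split in HxQ as [A [B EQ]].
    destruct (concat_map_seq_split Q i (nn (S k)) Hi) as [rest Erest].
    rewrite (norm_level (S k) F x (P ++ concat (map Q (seq 0 i)) ++ A) (B ++ rest)).
    + assert (Hcl : length (concat (map Q (seq 0 i))) = i * (m k - r (S k))).
      { apply length_concat_map_seq. intros t Ht; apply (HG t); lia. }
      assert (HAl : length A < m k - r (S k)) by (rewrite <- HQl, EQ, length_app; simpl; lia).
      rewrite !length_app, HPl, Hcl.
      destruct (Nat.ltb_spec (r (S k) + (i * (m k - r (S k)) + length A)) (r (S k))); [lia|].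
      f_equal. apply (Nat.div_unique _ _ i (length A)); lia.
    + exact HF.
    + rewrite EF, Erest, EQ, <- !app_assoc. auto.
Qed.

Lemma Xi_spec x k : Xi_rel lt FF m nn r x k (Xi lt FF m nn r x k).
Proof.
  unfold Xi; apply epsilon_spec.
  destruct k as [|k]; [exists 0%Z; left; auto|].
  destruct (ex_level_In x (S k)) as [F [HF Hx]].
  destruct (level_decomposition k F HF) as [G [R HD]].
  pose proof HD as [_ [_ [_ [_ [_ [_ D7]]]]]].
  destruct (proj1 (D7 x) Hx) as [i [Hi HxG]].
  destruct (classic (In x R)) as [HR|HR].
  - exists (-1)%Z; right; exists k; split; auto; exists F, G, R; tauto.
  - exists (Z.of_nat i); right; exists k; split; auto; exists F, G, R.
    split; [exact HF|split; [exact Hx|split; [exact HD|]]]. right; eauto.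
Qed.

Lemma Xi_succ x k : Xi lt FF m nn r x (S k) = Xi_of_position k (norm lt FF m x (S k)).
Proof. apply Xi_rel_position, Xi_spec. Qed.

Lemma Xi_zero x : Xi lt FF m nn r x 0 = 0%Z.
Proof. destruct (Xi_spec x 0) as [[_ H]|[k' [H _]]]; auto; discriminate. Qed.

Lemma norm_tail_of_Xi x k j : Xi lt FF m nn r x (S k) = Z.of_nat j ->
  r (S k) <= norm lt FF m x k < m k.
Proof.
  intros HX. destruct (Xi_spec x (S k))
    as [[H _]|[k' [Ek [F [G [R [HF [Hx [HD Hv]]]]]]]]]; [discriminate|].
  injection Ek as <-. rewrite HX in Hv.
  destruct Hv as [[_ Hv]|[HxR [i [Hi [HxG _]]]]]; [lia|].
  destruct (decomposition_blocks k F G R HF HD) as [P [HPm [HPl [HG EF]]]].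
  destruct (HG i Hi) as [EG [HQl HQn]].
  assert (HxQ : In x (skipn (length P) (G i))).
  { rewrite EG in HxG. apply in_app_or in HxG as [H|H]; auto. exfalso; apply HxR, HPm; auto. }
  apply in_split in HxQ as [A [B EQ]].
  pose proof HD as [D1 _].
  rewrite (norm_level k (G i) x (P ++ A) B); auto.
  - assert (length A < m k - r (S k)) by (rewrite <- HQl, EQ, length_app; simpl; lia).
    rewrite length_app, HPl. lia.
  - rewrite EG at 1. rewrite EQ, <- app_assoc; auto.
Qed.

Lemma norm_eq_below_Delta x y l : Delta lt FF m x y = l ->
  forall j, j < l -> norm lt FF m x j = norm lt FF m y j.
Proof.
  intros HD. set (P := fun k => norm lt FF m x k <> norm lt FF m y k /\
                     forall j, j < k -> norm lt FF m x j = norm lt FF m y j).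
  destruct (classic (exists k, P k)) as [Hex|Hno].
  - pose proof (epsilon_spec (inhabits 0) P Hex) as Hs. unfold Delta in HD. fold P in HD.
    rewrite HD in Hs. apply Hs.
  - intros j Hj. apply NNPP; intros Hne.
    destruct (ex_least_nat (fun k => norm lt FF m x k <> norm lt FF m y k)) as [k [Hk Hl]]; eauto.
    apply Hno; exists k; split; auto. intros i Hi; apply NNPP; apply Hl; auto.
Qed.

(** * Δ-captured copies *)

Lemma Delta_captured_disjoint l N D :
  Delta_captured lt FF m nn r l N D ->
  (forall i j t, i < N -> j < N -> i <> j -> In t (D i) -> ~ In t (D j)) ->
  (forall j a t, j < N -> nth_error (D j) a = Some t -> Xi lt FF m nn r t l = Z.of_nat j) /\
  (forall i j a t t', i < N -> j < N -> i <> j -> nth_error (D i) a = Some t ->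
     nth_error (D j) a = Some t' -> Delta lt FF m t t' = l).
Proof.
  intros [HN [mm [rr [R [_ [_ [HRl [HR [_ [_ [HXi HDelta]]]]]]]]]]] Hdisj.
  assert (rr = 0) as ->.
  { destruct R as [|x R]; [simpl in HRl; lia|]. exfalso.
    destruct (proj2 (HR 0 1 x ltac:(lia) ltac:(lia) ltac:(lia)) (or_introl eq_refl)) as [H0 H1].
    apply (Hdisj 0 1 x); auto; lia. }
  split.
  - intros j a t Hj Ht. apply (HXi j a t Hj Ht). lia.
  - intros i j a t t' Hi Hj Hij Ht Ht'. apply (HDelta i j a t t'); auto; lia.
Qed.

Definition sorted_trace (b s : list T) (K : nat) (p : list nat) : Prop :=
  StronglySorted lt s /\ (forall t, In t s <-> In t b) /\
  (exists F, level FF m K F /\ incl s F) /\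
  (forall i t, nth_error b i = Some t -> nth_error s (nth i p 0) = Some t).

Lemma ex_sorted_trace b : exists s K p, sorted_trace b s K p.
Proof.
  destruct (ex_sorted_perm lt lt_trans lt_total b) as [s [Hs Hsb]].
  destruct (ex_level_incl s) as [K [F [HF HsF]]].
  destruct (ex_positions b s) as [p Hp]; [intros t Ht; apply Hsb; auto|].
  exists s, K, p. split; [|split; [|split]]; eauto.
Qed.

Lemma ex_uniform_sorted_traces (B : list T -> Prop) :
  (forall b, B b -> b <> []) ->
  (forall b b', B b -> B b' -> b <> b' -> forall t, In t b -> ~ In t b') ->
  uncountable_set B ->
  exists (B' : list T -> Prop) (str : list T -> list T) K p,
    uncountable_set (fun s => exists b, B' b /\ s = str b) /\
    (forall b, B' b -> B b /\ sorted_trace b (str b) K p) /\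
    (forall b b', B' b -> B' b' -> b <> b' -> forall t, In t (str b) -> ~ In t (str b')).
Proof.
  intros Hne Hdisj HU.
  set (P := fun b (d : list T * (nat * list nat)) =>
              sorted_trace b (fst d) (fst (snd d)) (snd (snd d))).
  set (dat := fun b => epsilon (inhabits ([], (0, []))) (P b)).
  assert (Hdat : forall b, P b (dat b)).
  { intros b. apply epsilon_spec. destruct (ex_sorted_trace b) as [s [K [p H]]].
    exists (s, (K, p)); exact H. }
  destruct (uncountable_fiber B (fun b => fst (snd (dat b))) countable_nat HU) as [K HK].
  destruct (uncountable_fiber _ (fun b => snd (snd (dat b))) countable_list_nat HK) as [p Hp].
  set (B' := fun b => (B b /\ fst (snd (dat b)) = K) /\ snd (snd (dat b)) = p).
  assert (HB' : forall b, B' b -> B b /\ sorted_trace b (fst (dat b)) K p).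
  { intros b [[Hb <-] <-]. split; auto. apply Hdat. }
  assert (Hstr : forall b b', B' b -> B' b' -> b <> b' ->
                 forall t, In t (fst (dat b)) -> ~ In t (fst (dat b'))).
  { intros b b' Hb Hb' Hbb t Ht Ht'.
    destruct (HB' b Hb) as [HBb [_ [Hsb _]]], (HB' b' Hb') as [HBb' [_ [Hsb' _]]].
    apply (Hdisj b b' HBb HBb' Hbb t); [apply Hsb|apply Hsb']; auto. }
  exists B', (fun b => fst (dat b)), K, p. split; auto.
  apply uncountable_image; auto. intros b b' Hb Hb' E. apply NNPP; intros Hbb.
  destruct (HB' b Hb) as [HBb [_ [Hsb _]]].
  destruct b as [|t b0]; [exact (Hne _ HBb eq_refl)|].
  apply (Hstr _ _ Hb Hb' Hbb t); [|rewrite <- E]; apply Hsb; simpl; auto.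
Qed.

(* [nn (S l)] members of [B], Δ-captured at level [S l] with empty root, the
   first one inside a level-[l] set. *)
Record captured_copies (B : list T -> Prop) (l : nat) (b : nat -> list T) : Prop := {
  copies_in : forall j, j < nn (S l) -> B (b j);
  copies_inj : forall j j', j < nn (S l) -> j' < nn (S l) -> b j = b j' -> j = j';
  copies_Xi : forall j i t, j < nn (S l) -> nth_error (b j) i = Some t ->
    Xi lt FF m nn r t (S l) = Z.of_nat j;
  copies_norm : forall j j' i t t' k, j < nn (S l) -> j' < nn (S l) ->
    nth_error (b j) i = Some t -> nth_error (b j') i = Some t' -> k <= l ->
    norm lt FF m t k = norm lt FF m t' k;
  copies_level : exists F, level FF m l F /\ incl (b 0) F
}.

Lemma ex_captured_copies (B : list T -> Prop) :
  fully_Delta_capturing lt FF m nn r ->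
  (forall b, B b -> b <> []) ->
  (forall b b', B b -> B b' -> b <> b' -> forall t, In t b -> ~ In t b') ->
  uncountable_set B -> exists l b, captured_copies B l b.
Proof.
  intros Hcap Hne Hdisj HU.
  destruct (ex_uniform_sorted_traces B Hne Hdisj HU) as [B' [str [K [p [HU1 [HB' Hstr]]]]]].
  set (S1 := fun s => exists b, B' b /\ s = str b).
  assert (HS1 : forall s, S1 s -> StronglySorted lt s) by (intros s [b [Hb ->]]; apply HB'; auto).
  destruct (Hcap S1 HS1 HU1 K) as [l [HKl [D [HDS [HDinj HDc]]]]].
  set (bj := fun j => epsilon (inhabits []) (fun b => B' b /\ D j = str b)).
  assert (Hbj : forall j, j < nn l -> B' (bj j) /\ D j = str (bj j)).
  { intros j Hj. apply (epsilon_spec (inhabits []) (fun b => B' b /\ D j = str b)).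
    destruct (HDS j Hj) as [b [Hb ->]]; eauto. }
  assert (HN : 2 <= nn l) by apply HDc.
  destruct (Delta_captured_disjoint l (nn l) D HDc) as [HXi HDelta].
  { intros i j t Hi Hj Hij. rewrite (proj2 (Hbj i Hi)), (proj2 (Hbj j Hj)).
    apply Hstr; try apply Hbj; auto. intros E; apply Hij, HDinj; auto.
    rewrite (proj2 (Hbj i Hi)), (proj2 (Hbj j Hj)), E; auto. }
  assert (Hpos : forall j i t, j < nn l -> nth_error (bj j) i = Some t ->
                 nth_error (D j) (nth i p 0) = Some t).
  { intros j i t Hj Ht. rewrite (proj2 (Hbj j Hj)). apply (HB' _ (proj1 (Hbj j Hj))); auto. }
  destruct l as [|l]; [lia|]. exists l, bj. constructor.
  - intros j Hj; apply HB', Hbj; auto.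
  - intros j j' Hj Hj' E. apply HDinj; auto.
    rewrite (proj2 (Hbj j Hj)), (proj2 (Hbj j' Hj')), E; auto.
  - intros j i t Hj Ht. apply (HXi j (nth i p 0)); auto.
  - intros j j' i t t' k Hj Hj' Ht Ht' Hk. destruct (Nat.eq_dec j j') as [<-|Hjj]; [congruence|].
    apply (norm_eq_below_Delta t t' (S l)); [|lia]. apply (HDelta j j' (nth i p 0)); auto.
  - destruct (HB' _ (proj1 (Hbj 0 ltac:(lia)))) as [_ [_ [Hsb [[F [HF HsF]] _]]]].
    destruct (level_up K l F HF) as [F' [HF' HFF']]; [lia|]. exists F'; split; auto.
    intros t Ht. apply HFF', HsF, Hsb; auto.
Qed.

Lemma copies_positions B l b N : captured_copies B l b ->
  length (b 0) = N -> NoDup (b 0) ->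
  exists p : nat -> nat,
    (forall i t, nth_error (b 0) i = Some t -> norm lt FF m t l = p i) /\
    (forall i, i < N -> r (S l) <= p i < m l) /\
    (forall i i', i < N -> i' < N -> p i = p i' -> i = i').
Proof.
  intros Hb Hlen Hnd.
  destruct (uncountable_inhabited _ (o1_uncountable lt Homega1)) as [t0 _].
  assert (Hn : 0 < nn (S l)) by (pose proof (scheme_type_succ l); lia).
  assert (Hnth : forall i, i < N -> nth_error (b 0) i = Some (nth i (b 0) t0))
    by (intros i Hi; apply nth_error_nth'; lia).
  destruct (copies_level _ _ _ Hb) as [F [HF HbF]].
  exists (fun i => norm lt FF m (nth i (b 0) t0) l). split; [|split].
  - intros i t Ht. apply (nth_error_nth _ _ t0) in Ht. rewrite Ht; auto.
  - intros i Hi. apply (norm_tail_of_Xi _ _ 0). apply (copies_Xi _ _ _ Hb 0 i); auto.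
  - intros i i' Hi Hi' E. apply (NoDup_nth (b 0) t0); auto; try lia.
    apply (norm_level_inj l F); auto; apply HbF, nth_In; lia.
Qed.

Lemma ex_captured_lifted_copies {X} (e : T -> X) (A : list X -> Prop) N :
  fully_Delta_capturing lt FF m nn r -> 0 < N ->
  (forall a, A a -> length a = N /\ forall x, In x a -> exists t, x = e t) ->
  (forall a b, A a -> A b -> a <> b -> forall x, In x a -> ~ In x b) ->
  uncountable_set A ->
  exists B l b, captured_copies B l b /\ (forall b', B b' -> A (map e b')) /\
    (forall b1 b2, B b1 -> B b2 -> map e b1 = map e b2 -> b1 = b2).
Proof.
  intros Hcap HN HA Hdisj HU.
  destruct (ex_lifted_family e A) as [B [HBu [HBA HBinj]]]; [apply HA|exact HU|].
  destruct (ex_captured_copies B Hcap) as [l [b Hb]]; auto.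
  - intros b0 Hb0 E. subst b0. destruct (HA _ (HBA _ Hb0)) as [Hlen _]. simpl in Hlen. lia.
  - intros b b' Hb Hb' Hbb t Ht Ht'.
    apply (Hdisj _ _ (HBA _ Hb) (HBA _ Hb')) with (e t); [|apply in_map; auto ..].
    intros E; apply Hbb, HBinj; auto.
  - exists B, l, b; auto.
Qed.

(** * The functions [e_fun] on captured copies *)

Lemma e_fun_eq_below nE C x y l :
  (forall j, j < l -> norm lt FF m x j = norm lt FF m y j) ->
  forall k, k < l -> e_fun lt FF m nn r nE C x k = e_fun lt FF m nn r nE C y k.
Proof.
  intros Hn k Hk.
  assert (HX : Xi lt FF m nn r x k = Xi lt FF m nn r y k).
  { destruct k as [|k]; [rewrite !Xi_zero; auto|]. rewrite !Xi_succ, Hn; auto. }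
  unfold e_fun. rewrite HX, (Hn (Nat.pred k)); [reflexivity|lia].
Qed.

Lemma e_fun_Xi_zero nE C x k :
  Xi lt FF m nn r x k = 0%Z -> e_fun lt FF m nn r nE C x k = 0%Z.
Proof. intros H. unfold e_fun. rewrite H. reflexivity. Qed.

Lemma e_fun_Xi_pos nE C x k d : 0 < d -> Xi lt FF m nn r x k = Z.of_nat d ->
  e_fun lt FF m nn r nE C x k =
  if sign_test nE (C (Nat.pred k) d) (norm lt FF m x (Nat.pred k))
  then Z.of_nat d else (- Z.of_nat d)%Z.
Proof.
  intros Hd HX. unfold e_fun, sign_test. cbv zeta. rewrite HX, Nat2Z.id.
  replace (Z.leb (Z.of_nat d) 0) with false by (symmetry; apply Z.leb_gt; lia).
  destruct (existsb _ _); reflexivity.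
Qed.

Lemma e_fun_image_uncountable nE C : fully_Delta_capturing lt FF m nn r ->
  uncountable_set (fun f => exists a : T, f = e_fun lt FF m nn r nE C a).
Proof.
  intros Hcap [f Hf].
  set (e := e_fun lt FF m nn r nE C) in *.
  destruct (uncountable_fiber (fun _ : T => True) (fun a => f (e a)) countable_nat
              (o1_uncountable lt Homega1)) as [c Hc].
  destruct (ex_captured_copies (fun s => exists a, (True /\ f (e a) = c) /\ s = [a]) Hcap)
    as [l [b Hb]].
  - intros s [a [_ ->]]; discriminate.
  - intros s s' [a [_ ->]] [a' [_ ->]] Hne t [<-|[]] [<-|[]]. auto.
  - apply uncountable_image; auto. intros a a' _ _ E; injection E; auto.
  - assert (H2 : 1 < nn (S l)) by (pose proof (scheme_type_succ l); lia).
    destruct (copies_in _ _ _ Hb 0 ltac:(lia)) as [a0 [[_ Ha0] E0]].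
    destruct (copies_in _ _ _ Hb 1 H2) as [a1 [[_ Ha1] E1]].
    assert (Hee : e a0 = e a1) by (apply Hf; eauto; congruence).
    assert (X0 : Xi lt FF m nn r a0 (S l) = Z.of_nat 0)
      by (apply (copies_Xi _ _ _ Hb 0 0); [lia|rewrite E0; auto]).
    assert (X1 : Xi lt FF m nn r a1 (S l) = Z.of_nat 1)
      by (apply (copies_Xi _ _ _ Hb 1 0); [lia|rewrite E1; auto]).
    pose proof (e_fun_Xi_zero nE C a0 (S l) X0) as H0.
    pose proof (e_fun_Xi_pos nE C a1 (S l) 1 ltac:(lia) X1) as H1.
    fold e in H0, H1. rewrite Hee, H1 in H0. destruct (sign_test _ _ _); discriminate.
Qed.

Lemma copies_lex_pattern nE C B l b d s (c : nat -> bool) :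
  captured_copies B l b -> 0 < d < nn (S l) -> C l d = s ->
  (forall i t, nth_error (b 0) i = Some t -> sign_test nE s (norm lt FF m t l) = c i) ->
  forall i x y, let e := e_fun lt FF m nn r nE C in
  nth_error (map e (b 0)) i = Some x -> nth_error (map e (b d)) i = Some y ->
  (lex_lt x y <-> c i = true) /\ (lex_lt y x <-> c i = false).
Proof.
  intros Hb Hd HC Hc i x' y' e Hx' Hy'. rewrite nth_error_map in Hx', Hy'.
  destruct (nth_error (b 0) i) as [x|] eqn:Hx; [|discriminate].
  destruct (nth_error (b d) i) as [y|] eqn:Hy; [|discriminate].
  injection Hx' as <-; injection Hy' as <-.
  apply (lex_lt_signed_at (e x) (e y) (S l) (c i) (Z.of_nat d)).
  - apply e_fun_eq_below. intros k Hk. apply (copies_norm _ _ _ Hb 0 d i); auto; lia.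
  - apply e_fun_Xi_zero, (copies_Xi _ _ _ Hb 0 i); auto; lia.
  - lia.
  - unfold e. rewrite (e_fun_Xi_pos nE C y (S l) d); [|lia|apply (copies_Xi _ _ _ Hb d i); auto; lia].
    simpl Nat.pred. rewrite HC, <- (copies_norm _ _ _ Hb 0 d i x y l), (Hc i x Hx); auto; lia.
Qed.

Lemma e_fun_image_realizes_pattern nE C :
  fully_Delta_capturing lt FF m nn r -> valid_enum m nn r nE C ->
  forall (tau : nat -> bool) (A : list (nat -> Z) -> Prop),
  (forall a, A a -> length a = 2 * nE /\ StronglySorted lex_lt a /\
     forall x, In x a -> exists t, x = e_fun lt FF m nn r nE C t) ->
  (forall a b, A a -> A b -> a <> b -> forall x, In x a -> ~ In x b) ->
  uncountable_set A ->
  exists a b, A a /\ A b /\ a <> b /\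
    forall i x y, i < 2 * nE -> nth_error a i = Some x -> nth_error b i = Some y ->
      (lex_lt x y <-> tau i = false).
Proof.
  intros Hcap Hve tau A HA Hdisj HU.
  set (e := e_fun lt FF m nn r nE C).
  assert (HnE : 0 < 2 * nE) by (apply (uncountable_lists_length_pos A); [apply HA|auto]).
  destruct (ex_captured_lifted_copies e A (2 * nE) Hcap) as [B [l [b [Hb [HBA HBinj]]]]];
    [lia|intros a Ha; split; apply HA; auto|auto|auto|].
  assert (Hn : 1 < nn (S l)) by (pose proof (scheme_type_succ l); lia).
  assert (HAj : forall j, j < nn (S l) -> A (map e (b j))) by (intros; apply HBA, Hb; auto).
  assert (Hnd : NoDup (b 0)).
  { apply (NoDup_map_inv e), (StronglySorted_NoDup lex_lt); [apply lex_lt_irrefl|].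
    apply HA, HAj; lia. }
  assert (Hlen : length (b 0) = 2 * nE).
  { rewrite <- (length_map e). apply HA, HAj; lia. }
  destruct (copies_positions B l b (2 * nE) Hb Hlen Hnd) as [p [Hp [Hrange Hinj]]].
  destruct (ex_sign_pattern nE tau p (r (S l)) (m l) ltac:(lia) Hrange Hinj)
    as [c [s [Hs1 [Hs2 [Hs3 Hsign]]]]].
  destruct (proj2 (Hve l) s (conj Hs1 (conj Hs2 Hs3))) as [d [Hd HCd]].
  assert (Hc : forall i t, nth_error (b 0) i = Some t ->
               sign_test nE s (norm lt FF m t l) = Bool.eqb (tau i) c).
  { intros i t Ht. rewrite (Hp i t Ht). apply Hsign.
    rewrite <- Hlen. apply nth_error_Some. congruence. }
  pose proof (copies_lex_pattern nE C B l b d s _ Hb Hd HCd Hc) as Hpat.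
  assert (Hne : map e (b 0) <> map e (b d)).
  { intros E. apply HBinj in E; try apply Hb; try lia.
    apply (copies_inj _ _ _ Hb) in E; lia. }
  assert (HA0d : A (map e (b 0)) /\ A (map e (b d))) by (split; apply HAj; lia).
  destruct c.
  - exists (map e (b d)), (map e (b 0)). split; [tauto|split; [tauto|split; [auto|]]].
    intros i x y Hi Hx Hy. destruct (Hpat i y x Hy Hx) as [_ ->].
    destruct (tau i); simpl; split; congruence.
  - exists (map e (b 0)), (map e (b d)). split; [tauto|split; [tauto|split; [auto|]]].
    intros i x y Hi Hx Hy. destruct (Hpat i x y Hx Hy) as [-> _].
    destruct (tau i); simpl; split; congruence.
Qed.

End ConstructionScheme.

Theorem mainTheorem6 (T : Type) (lt : T -> T -> Prop) (nE : nat)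
  (m nn r : nat -> nat) (FF : list T -> Prop) (C : nat -> nat -> list nat) :
  is_omega1 lt ->
  construction_scheme lt m nn r FF ->
  fully_Delta_capturing lt FF m nn r ->
  (forall k, 2 ^ m k <= nn (S k)) ->
  valid_enum m nn r nE C ->
  entangled lex_lt (fun f => exists a : T, f = e_fun lt FF m nn r nE C a) (2 * nE).
Proof.
  (* The bound [2 ^ m k <= nn (S k)] is unused: in the paper it makes room for
     the enumerations [C], and here [valid_enum] provides one. *)
  intros Homega1 Hscheme Hcap _ Hve. split.
  - exact (e_fun_image_uncountable T lt m nn r FF Homega1 Hscheme nE C Hcap).
  - exact (e_fun_image_realizes_pattern T lt m nn r FF Homega1 Hscheme nE C Hcap Hve).
Qed.
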